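(* Let $\mathcal D$ be a $(\gamma,V)$-stable distribution of $\mathbf X$. For a set of families $A\subseteq\mathcal F_{d,k}$ and an equivalence class $E$, let $E^{\cap A}:=\{G\in E: A\subseteq G\}$. Let $E_*$ be an optimal equivalence class, let $G^*\in E_*^{\cap A}$, and suppose there is an equivalence class $\tilde E\in\mathcal E_{d,k}$ with $\tilde E\neq E_*$, $\mathcal S(\tilde E)\ge\mathcal S^*-\gamma$ and $\tilde E^{\cap A}\neq\emptyset$. Then there exists a graph $\tilde G\in\tilde E^{\cap A}$ such that the families of all the variables in $V$ are the same in $G^*$ and in $\tilde G$.
   Context: $\mathbf X=(X_1,\dots,X_d)$ is a random vector; $k$ a fixed positive integer. A family is $\langle X_i,\Pi\rangle$ with $\Pi\subseteq\mathbf X\setminus\{X_i\}$, $|\Pi|\le k$, and $H(\langle X_i,\Pi\rangle)=H(X_i\mid\Pi)$; $\mathcal F_{d,k}$ is the set of families. $\mathcal G_{d,k}$ = DAGs over $\mathbf X$ with in-degree $\le k$, identified with their family sets; $\mathcal S(F)=-\sum_{f\in F}H(f)$; $\mathcal S^*=\max_{G\in\mathcal G_{d,k}}\mathcal S(G)$. $\mathcal E_{d,k}$ is the set of Markov equivalence classes (ECs) on $\mathcal G_{d,k}$ (DAGs with the same conditional independence constraints), which share a score $\mathcal S(E)$; an optimal EC has score $\mathcal S^*$. For $V\subseteq\mathbf X$, $\mathcal G_V$ is the set of DAGs over $V$ with in-degree at most $k$. $(\gamma,V)$-stable: for $\gamma>0$ and $V\subseteq\mathbf X$, (1) in every $G\in\mathcal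 G_{d,k}$ with $\mathcal S(G)\ge\mathcal S^*-\gamma$ all parents of every variable in $V$ are in $V$; (2) for the marginal distribution on $V$ (over $\mathcal G_V$) there is a unique optimal EC and the score gap between the best and second-best EC is more than $\gamma$. *)

From HB Require Import structures.
From mathcomp Require Import all_boot all_order all_algebra.
From mathcomp Require Import reals exp.
Set Implicit Arguments. Unset Strict Implicit. Unset Printing Implicit Defensive.
Import Order.TTheory GRing.Theory Num.Theory.
Local Open Scope ring_scope.

Section BN.
Variable R : realType.
Variable I : finType.
Variable Al : finType.  (* common finite alphabet of the variables *)

Definition outcome := {ffun I -> Al}.
Definition is_dist (P : outcome -> R) : Prop :=
  (forall x, 0 <= P x) /\ \sum_x P x = 1.

Definition marg (P : outcome -> R) (S : {set I}) (x : outcome) : R :=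
  \sum_(z : outcome | [forall i in S, z i == x i]) P z.

Definition condH (P : outcome -> R) (i : I) (Pi : {set I}) : R :=
  - \sum_x P x * ln (marg P (i |: Pi) x / marg P Pi x).

(* A directed graph is given by its parent sets. *)
Definition graph := {ffun I -> {set I}}.

Definition edge (G : graph) : rel I := fun u v => u \in G v.

Definition acyclic (G : graph) : bool :=
  [forall u, forall v, (u \in G v) ==> ~~ connect (edge G) v u].

Definition dagb (k : nat) (G : graph) : bool :=
  acyclic G && [forall v, (#|G v| <= k)%N].

Definition famset (G : graph) : {set I * {set I}} := [set (v, G v) | v : I].

Definition is_family (k : nat) (f : I * {set I}) : bool :=
  (f.1 \notin f.2) && (#|f.2| <= k)%N.

Definition score (P : outcome -> R) (G : graph) : R :=
  - \sum_v condH P v (G v).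

Definition empty_graph : graph := [ffun _ => set0].

Definition Sstar (P : outcome -> R) (k : nat) : R :=
  \big[Num.max/score P empty_graph]_(G : graph | dagb k G) score P G.

Definition adj (G : graph) : rel I := fun u v => (u \in G v) || (v \in G u).

Definition is_path (G : graph) (a b : I) (s : seq I) : bool :=
  path (adj G) a s && (last a s == b) && uniq (a :: s).

Definition active (G : graph) (C : {set I}) (a : I) (s : seq I) : Prop :=
  let full := a :: s in
  forall j, (j.+2 < size full)%N ->
    let u := nth a full j in
    let v := nth a full j.+1 in
    let w := nth a full j.+2 in
    if (u \in G v) && (w \in G v)
    then exists2 c, c \in C & connect (edge G) v c
    else v \notin C.

Definition dsep (G : graph) (A B C : {set I}) : Prop :=
  forall a b, a \in A -> b \in B ->
    forall s, is_path G a b s -> ~ active G C a s.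

Definition markov_equiv (G1 G2 : graph) : Prop :=
  forall A B C : {set I}, [disjoint A & B] -> [disjoint A & C] -> [disjoint B & C] ->
    (dsep G1 A B C <-> dsep G2 A B C).

End BN.

Definition margV (R : realType) (I Al : finType) (P : outcome I Al -> R) (V : {set I})
  (y : outcome {i : I | i \in V} Al) : R :=
  \sum_(z : outcome I Al | [forall i : {i : I | i \in V}, z (val i) == y i]) P z.

Arguments margV {R I Al} P V y.

Definition stable (R : realType) (I Al : finType) (k : nat) (P : outcome I Al -> R)
  (gamma : R) (V : {set I}) : Prop :=
  (forall G : graph I, dagb k G -> Sstar P k - gamma <= score P G ->
     forall v, v \in V -> G v \subset V) /\
  (exists G0 : graph {i : I | i \in V},
     [/\ dagb k G0, score (margV P V) G0 = Sstar (margV P V) k &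
        forall G : graph {i : I | i \in V}, dagb k G -> ~ markov_equiv G G0 ->
          score (margV P V) G < Sstar (margV P V) k - gamma]).

From HB Require Import structures.
From mathcomp Require Import all_boot all_order all_algebra.
From mathcomp Require Import boolp reals exp.
From mathcomp Require Import zify lra.
Import Order.TTheory GRing.Theory Num.Theory.

(* Let G agree with G* on V and with G~ outside V.  By stability every vertex of V has all its
   parents in V, both in G* and in G~, so G is a DAG of in-degree at most k containing A, and
   the score of such a graph splits into the marginal score of its restriction to V plus a
   part that only depends on the families outside V.  If the restriction of G* or of G~ were
   not equivalent to the optimal graph G0 on V, replacing it by G0 would gain more than gamma,
   against near-optimality; so the two restrictions are Markov equivalent.  Finally
   d-connection given C is witnessed by walks whose colliders lie in C and whose other vertices
   avoid C; such a walk is rerouted on its maximal segments inside V by the equivalence of the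
   restrictions, and is kept as it is elsewhere, where G and G~ coincide. *)

Set Implicit Arguments. Unset Strict Implicit. Unset Printing Implicit Defensive.

Lemma not_uniq_split (T : eqType) (t : seq T) :
  ~~ uniq t -> exists p x q r, t = p ++ x :: q ++ x :: r.
Proof.
elim: t => [|y t IH] //=; rewrite negb_and negbK => /orP [/splitPr [q r] | /IH].
  by exists [::], y, q, r.
by case=> [p [x [q [r ->]]]]; exists (y :: p), x, q, r.
Qed.

Section Walks.
Variable I : finType.
Implicit Types (G : graph I) (C : {set I}) (Q : I -> I -> I -> bool).

Definition ancestor G C v := [exists c in C, connect (edge G) v c].
Definition collider G x y z := (x \in G y) && (z \in G y).
(* [open_at] is the condition imposed by [active] on a middle vertex y, [sopen_at] its strict
   form in which a collider must itself lie in C.  Walks of both kinds connect the same pairs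
   of vertices outside C, and strict ones only depend on the parent sets along the walk. *)
Definition open_at G C x y z := if collider G x y z then ancestor G C y else y \notin C.
Definition sopen_at G C x y z := if collider G x y z then y \in C else y \notin C.

Definition next_ok Q x y t := if t is z :: _ then Q x y z else true.

Fixpoint walk G Q t :=
  if t is x :: t1 then
    if t1 is y :: t2 then [&& adj G x y, next_ok Q x y t2 & walk G Q t1] else true
  else true.
#[global] Arguments walk : simpl never.

Definition junction_ok Q p y r :=
  if (p, r) is (_ :: _, z :: _) then Q (last y p) y z else true.

Lemma walk_cons2 G Q x y t :
  walk G Q (x :: y :: t) = [&& adj G x y, next_ok Q x y t & walk G Q (y :: t)].
Proof. by []. Qed.

Lemma walk1 G Q x : walk G Q [:: x]. Proof. by []. Qed.

Lemma walk_consK G Q x t : walk G Q (x :: t) -> walk G Q t.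
Proof. by case: t => // y t; rewrite walk_cons2 => /and3P []. Qed.

Lemma walk_cat G Q p y r :
  walk G Q (p ++ y :: r) = [&& walk G Q (rcons p y), walk G Q (y :: r) & junction_ok Q p y r].
Proof.
elim: p => [|u [|u' p] IH]; first by rewrite walk1 andbT.
  clear IH; case: r => [|z r]; rewrite /= ?walk_cons2 ?walk1 /junction_ok /= ?andbT //.
  by case: (adj G u y); case: (Q u y z); rewrite /= ?andbT ?andbF.
rewrite [_ ++ _]/= rcons_cons !walk_cons2 -cat_cons IH.
have -> : next_ok Q u u' (p ++ y :: r) = next_ok Q u u' (rcons p y) by case: p {IH}.
by case: adj; case: next_ok; case: walk.
Qed.

Lemma walk_path G Q a s : walk G Q (a :: s) -> path (adj G) a s.
Proof. by elim: s a => [|y s IH] a //; rewrite walk_cons2 /= => /and3P [-> _ /IH]. Qed.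

Lemma walkP G Q x0 a s : path (adj G) a s ->
  reflect (forall j, j.+2 < size (a :: s) ->
             Q (nth x0 (a :: s) j) (nth x0 (a :: s) j.+1) (nth x0 (a :: s) j.+2))
          (walk G Q (a :: s)).
Proof.
elim: s a => [|y s IH] a /=; first by move=> _; apply: ReflectT.
case/andP=> ay /IH {}IH; rewrite walk_cons2 ay /=.
apply: (iffP andP) => [[Qa /IH Qs] [|j] | Qj]; last first.
- split; last by apply/IH => j; apply: (Qj j.+1).
  by case: s Qj {IH} => // z s Qj; apply: (Qj 0).
- exact: Qs.
- by case: s Qa {IH Qs} => [|z s].
Qed.

Lemma open_atP G C x y z :
  reflect (if collider G x y z then exists2 c, c \in C & connect (edge G) y c
           else y \notin C) (open_at G C x y z).
Proof. by rewrite /open_at; case: ifP => _; [apply: exists_inP | apply: idP]. Qed.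

Lemma active_walk G C a s : path (adj G) a s ->
  active G C a s <-> walk G (open_at G C) (a :: s).
Proof.
move=> pas; split => [act | /(walkP _ a pas) w full j /w];
  by [apply/(walkP _ a pas) => j /act /open_atP | apply/open_atP].
Qed.

Lemma ancestor_edge G C u v : u \in G v -> ancestor G C v -> ancestor G C u.
Proof.
move=> uv /exists_inP [c Cc vc]; apply/exists_inP; exists c => //.
exact: connect_trans (connect1 uv) vc.
Qed.

Lemma open_walk_ancestor G C x t : walk G (open_at G C) (x :: t) ->
  x \in G (head x t) -> ~~ path (edge G) x t -> ancestor G C x.
Proof.
elim: t x => [|y t IH] x //=; rewrite walk_cons2 /edge => /and3P [_ open_y walk_y] xy.
rewrite xy /= => not_path; suff: ancestor G C y by apply: ancestor_edge.
case: t IH open_y walk_y not_path => [|y' t] IH open_y walk_y not_path //.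
have [yy' | y'y] := boolP (y \in G y'); first exact: IH walk_y yy' not_path.
have {}y'y : y' \in G y by move: walk_y; rewrite walk_cons2 /adj (negbTE y'y) => /and3P [].
by move: open_y; rewrite /next_ok /open_at /collider xy y'y.
Qed.

Lemma open_walk_shortcut G C p x q r :
  walk G (open_at G C) (p ++ x :: q ++ x :: r) -> walk G (open_at G C) (p ++ x :: r).
Proof.
rewrite walk_cat -cat_cons walk_cat => /and3P [wp /and3P [loop wr jr] jp].
rewrite walk_cat wp wr /=; case: p jp {wp} => [|u p] //; case: r jr {wr} => [|z r] // jr jp.
rewrite /junction_ok /= in jp jr *; set u' := last u p in jp *.
have {}jp : open_at G C u' x (head x q) by case: q loop jp jr.
have xq : adj G x (head x q) by case: q loop {jp jr} => [|w q] /walk_path /= /andP [].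
rewrite /open_at /collider in jp jr *.
case u'x: (u' \in G x) jp => /= jp; last exact: jp.
case zx: (z \in G x) jr => /= jr; last by rewrite andbF in jr.
case qx: (head x q \in G x) jp => //= _; case lx: (last x q \in G x) jr => //= _.
apply: (open_walk_ancestor loop); last by rewrite rcons_path /edge lx andbF.
by case: q {loop lx} qx xq => [|w q] /= qx; rewrite /adj qx orbF.
Qed.

Lemma open_walk_uniq G C a s : walk G (open_at G C) (a :: s) ->
  exists s', [/\ walk G (open_at G C) (a :: s'), uniq (a :: s') & last a s' = last a s].
Proof.
have [n] := ubnP (size s); elim: n s => // n IH s lt_s w_s.
have [|/not_uniq_split [[|? p] [x [q [r def_s]]]]] := boolP (uniq (a :: s)); first by exists s.
- case: def_s w_s lt_s => <- -> /(open_walk_shortcut (p := [::])) w_r.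
  rewrite size_cat /= => lt_r; have [|s' [w' u' e]] := IH r _ w_r.
    by move: lt_r; clear; lia.
  by exists s'; rewrite e last_cat.
- case: def_s w_s lt_s => _ -> /(open_walk_shortcut (p := a :: p)) w_r.
  rewrite !size_cat /= => lt_r; have [|s' [w' u' e]] := IH (p ++ x :: r) _ w_r.
    by move: lt_r; rewrite !size_cat /=; clear; lia.
  by exists s'; split; rewrite // e !last_cat /= last_cat.
Qed.

Lemma sopen_walk_open G C t : walk G (sopen_at G C) t -> walk G (open_at G C) t.
Proof.
elim: t => [|x [|y t] IH] //; rewrite !walk_cons2 => /and3P [-> Q_xy /IH ->].
rewrite andbT; case: t Q_xy {IH} => [|z t] //=; rewrite /sopen_at /open_at.
by case: ifP => // _ Cy; apply/exists_inP; exists y.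
Qed.

Lemma open_walk_active G C a s : walk G (open_at G C) (a :: s) ->
  exists s', is_path G a (last a s) s' /\ active G C a s'.
Proof.
case/open_walk_uniq => s' [w' u' <-]; exists s'.
have p' := walk_path w'; by rewrite /is_path p' u' eqxx; split => //; apply/active_walk.
Qed.

Lemma ancestor_chain G C v : ancestor G C v -> v \notin C ->
  exists p, [/\ path (edge G) v p, last v p \in C & all [predC C] (belast v p)].
Proof.
case/exists_inP=> c Cc /connectP [p p_path c_def]; subst c.
elim: p v p_path Cc => [|x p IH] v /=; first by move=> _ ->.
case/andP=> vx /IH {}IH Cl vC; have [Cx|/IH [//|p' [p'_path Cl' Cp']]] := boolP (x \in C).
  by exists [:: x]; rewrite /= vx Cx vC.
by exists (x :: p'); rewrite /= vx p'_path Cl' vC.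
Qed.

Fixpoint detour (v : I) (p : seq I) : seq I :=
  if p is x :: p' then v :: rcons (detour x p') v else [:: v].

Section Detour.
Variables (G : graph I) (C : {set I}).
Hypothesis G_asym : forall u v, u \in G v -> v \notin G u.

Lemma sopen_detour p v u w :
  path (edge G) v p -> last v p \in C -> all [predC C] (belast v p) ->
  adj G u v -> adj G v w -> p != [::] ->
  walk G (sopen_at G C) (u :: detour v p ++ [:: w]).
Proof.
elim: p v u w => [|x1 p1 IH] v u w //= /andP [vx p_path] Cl /andP [vC Cp] uv vw _.
have {}vx : v \in G x1 := vx; have xv := G_asym vx; have v_x1 : adj G v x1 by rewrite /adj vx.
have x1_v : adj G x1 v by rewrite /adj vx orbT.
case: p1 IH p_path Cl Cp => [|x2 p2] IH p_path Cl Cp.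
  rewrite /= !walk_cons2 /next_ok /sopen_at /collider uv vw v_x1 x1_v vx (negbTE xv).
  by rewrite !andbF /= Cl vC.
have := IH x1 v v p_path Cl Cp v_x1 x1_v isT; rewrite [detour x1 _]/=; set E := detour x2 p2.
have -> : v :: (x1 :: rcons E x1) ++ [:: v] = (v :: x1 :: E) ++ x1 :: [:: v].
  by rewrite /= cat_rcons.
have -> : u :: v :: rcons (x1 :: rcons E x1) v ++ [:: w] = (u :: v :: x1 :: E) ++ x1 :: [:: v; w].
  by rewrite /= -!cats1 -!catA.
rewrite !walk_cat => /and3P [w1 _ j]; apply/and3P; split; last exact: j.
  by move: w1; rewrite /= !walk_cons2 uv /next_ok /sopen_at /collider (negbTE xv) andbF vC.
by rewrite !walk_cons2 /next_ok /sopen_at /collider x1_v vw (negbTE xv) /= vC.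
Qed.

Lemma open_walk_sopen u v s : walk G (open_at G C) (u :: v :: s) ->
  exists2 s', walk G (sopen_at G C) (u :: v :: s') & last v s' = last v s.
Proof.
elim: s u v => [|w s IH] u v.
  by rewrite !walk_cons2 => /and3P [uv _ _]; exists [::]; rewrite // walk_cons2 uv.
rewrite walk_cons2 => /and3P [uv open_v /IH [s' w' last_s']].
move: (w'); rewrite walk_cons2 => /and3P [vw next_w w_s'].
have [sopen_v | ] := boolP (sopen_at G C u v w).
  by exists (w :: s'); rewrite // walk_cons2 uv /next_ok sopen_v w'.
rewrite [sopen_at _ _ u v w]/sopen_at; move: open_v; rewrite /next_ok /open_at.
case: (collider G u v w) => [anc vC | -> //].
have [[|x p] [p_path Cl Cp]] := ancestor_chain anc vC; first by rewrite Cl in vC.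
exists (rcons (detour x p) v ++ w :: s'); last by rewrite last_cat.
have -> : [:: u, v & rcons (detour x p) v ++ w :: s'] = (u :: detour v (x :: p)) ++ w :: s' by [].
rewrite walk_cat -cats1 cat_cons sopen_detour //= w_s' /junction_ok /=.
by case: s' next_w {w_s' last_s' w'} => // z s' next_w; rewrite last_rcons.
Qed.

Lemma active_sopen_walk a b s : is_path G a b s -> active G C a s ->
  exists2 s', walk G (sopen_at G C) (a :: s') & last a s' = b.
Proof.
case/andP=> /andP [a_path /eqP <-] _ /(active_walk _ a_path).
case: s {a_path} => [|v s]; first by exists [::].
by case/open_walk_sopen=> s' w' last_s'; exists (v :: s').
Qed.

End Detour.

Lemma sopen_walk_active G C a s : walk G (sopen_at G C) (a :: s) ->
  exists s', is_path G a (last a s) s' /\ active G C a s'.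
Proof. by move/sopen_walk_open; apply: open_walk_active. Qed.

Lemma not_dsep1P G C a b :
  ~ dsep G [set a] [set b] C <-> exists s, is_path G a b s /\ active G C a s.
Proof.
split=> [not_sep | [s [ab act]] sep]; last by apply: (sep a b) act; rewrite ?set11.
apply: contrapT => no_path; apply: not_sep => x y /set1P -> /set1P -> s ab act.
by apply: no_path; exists s.
Qed.

Lemma walk_rcons G Q a s w : walk G Q (a :: rcons s w) =
  [&& walk G Q (a :: s), adj G (last a s) w & (s == [::]) || Q (last a (belast a s)) (last a s) w].
Proof.
case/lastP: s => [|s x]; first by rewrite walk_cons2 /= !andbT.
rewrite -cats1 cat_rcons -cat_cons walk_cat rcons_cons walk_cons2 /junction_ok.
by rewrite belast_rcons !last_rcons /= !andbT; case: s.
Qed.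

Lemma sopen_atC G C x y z : sopen_at G C x y z = sopen_at G C z y x.
Proof. by rewrite /sopen_at /collider andbC. Qed.

Lemma adjC G x y : adj G x y = adj G y x. Proof. exact: orbC. Qed.

Lemma sopen_at_nc G C x y z : (x \notin G y) || (z \notin G y) -> sopen_at G C x y z = (y \notin C).
Proof. by case/orP=> /negbTE nG; rewrite /sopen_at /collider nG ?andbF. Qed.

(* Parents agree outside V and no edge enters V from outside: a strict walk of G1 is copied
   verbatim outside V and rerouted on its maximal segments inside V by [transfer_in]. *)
Section Transfer.
Variables (G1 G2 : graph I) (V C : {set I}).
Hypothesis G12_out : forall v, v \notin V -> G1 v = G2 v.
Hypothesis G1_in : forall v, v \in V -> G1 v \subset V.
Hypothesis G2_in : forall v, v \in V -> G2 v \subset V.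
Hypothesis transfer_in : forall a s, a \in V -> all (mem V) s -> a \notin C -> last a s \notin C ->
  walk G1 (sopen_at G1 C) (a :: s) ->
  exists2 s', walk G2 (sopen_at G2 C) (a :: s') & last a s' = last a s.

Lemma not_parent (G : graph I) x a :
  (forall v, v \in V -> G v \subset V) -> x \in V -> a \notin V -> a \notin G x.
Proof. by move=> G_in xV; apply: contra => /(subsetP (G_in x xV)). Qed.

Lemma parent_out a z : a \notin V -> (a \in G1 z) = (a \in G2 z).
Proof.
move=> aV; have [zV|/G12_out -> //] := boolP (z \in V).
by rewrite (negbTE (not_parent G1_in zV aV)) (negbTE (not_parent G2_in zV aV)).
Qed.

Lemma adj_out x y : x \notin V -> adj G1 x y = adj G2 x y.
Proof. by move=> xV; rewrite /adj (parent_out _ xV) (G12_out xV). Qed.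

Lemma sopen_at_out x y z : y \notin V -> sopen_at G1 C x y z = sopen_at G2 C x y z.
Proof. by move=> /G12_out yV; rewrite /sopen_at /collider yV. Qed.

Lemma sopen_at_in (G : graph I) : (forall v, v \in V -> G v \subset V) ->
  forall x y z, y \in V -> x \notin V -> sopen_at G C x y z = (y \notin C).
Proof. by move=> G_in x y z yV /(not_parent G_in yV) xy; rewrite sopen_at_nc ?xy. Qed.

Lemma transfer_cons_out a z s s' : a \notin V ->
  walk G1 (sopen_at G1 C) (a :: z :: s) -> walk G2 (sopen_at G2 C) (z :: s') ->
  (z \in V -> z \notin C) -> (z \notin V -> ohead s' = ohead s) ->
  walk G2 (sopen_at G2 C) (a :: z :: s').
Proof.
rewrite walk_cons2 => aV /and3P [az next_z _] w' zC head_s'.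
rewrite walk_cons2 -adj_out // az w' andbT.
case: s' {w'} head_s' => // y' s' head_s'; rewrite /next_ok.
have [zV|zV] := boolP (z \in V); first by rewrite (sopen_at_in G2_in) ?zC.
by move: (head_s' zV); case: s {head_s'} next_z => //= y s next_z [->]; rewrite -sopen_at_out.
Qed.

Lemma transfer_cat_out a seg w r seg' r' :
  w \notin V -> last a seg \in V -> last a seg \notin C ->
  walk G1 (sopen_at G1 C) ((a :: seg) ++ w :: r) ->
  walk G2 (sopen_at G2 C) (a :: seg') -> last a seg' = last a seg ->
  walk G2 (sopen_at G2 C) (w :: r') -> ohead r' = ohead r ->
  walk G2 (sopen_at G2 C) ((a :: seg') ++ w :: r').
Proof.
move=> wV xV xC; rewrite walk_cat walk_rcons => /and3P [/and3P [_ xw _] _ jn] w_seg' last_seg' w_r'.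
rewrite walk_cat walk_rcons w_seg' w_r' last_seg' adjC -adj_out // adjC xw.
rewrite sopen_atC (sopen_at_in G2_in) // xC orbT /=; move: jn; rewrite /junction_ok /= last_seg'.
by case: r' {w_r'} => [|z' r'] //; case: r => //= z r jn [->]; rewrite -sopen_at_out.
Qed.

(* When a is outside V its successor is kept, as the triple centred on it is copied from G1. *)
Lemma transfer_walk a s : walk G1 (sopen_at G1 C) (a :: s) -> last a s \notin C ->
  (a \in V -> a \notin C) ->
  exists s', [/\ walk G2 (sopen_at G2 C) (a :: s'), last a s' = last a s &
                 a \notin V -> ohead s' = ohead s].
Proof.
have [n] := ubnP (size s); elim: n a s => // n IH a s lt_s w_s Cl aC.
have [aV | aV] := boolP (a \in V); last first.
  case: s lt_s w_s Cl => [|z s] lt_s w_s Cl; first by exists [::].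
  have zC : z \in V -> z \notin C.
    move=> zV; move: w_s Cl; rewrite walk_cons2 => /and3P [_ + _].
    by case: s {lt_s} => [|y s] // + _; rewrite /next_ok (sopen_at_in G1_in).
  have [s' [w' last_s' head_s']] := IH z s lt_s (walk_consK w_s) Cl zC.
  by exists (z :: s'); split => //; apply: transfer_cons_out w_s w' zC head_s'.
move: lt_s w_s Cl; have [/split_find [w seg r wV] | ] := boolP (has [predC V] s); last first.
  rewrite has_predC negbK => sV _ w_s Cl; have [s' w' last_s'] := transfer_in aV sV (aC aV) Cl w_s.
  by exists s'; split => //; rewrite aV.
rewrite has_predC negbK cat_rcons -cat_cons => segV lt_s w_s Cl; have {}wV : w \notin V := wV.
move: (w_s); rewrite walk_cat walk_rcons => /and3P [/and3P [w_seg _ tri] w_r _].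
have xV : last a seg \in V.
  by apply: (allP (_ : all (mem V) (a :: seg))) (mem_last a seg); rewrite /= aV.
have xC : last a seg \notin C.
  by case/orP: tri => [/eqP -> | ]; [apply: aC | rewrite sopen_atC (sopen_at_in G1_in)].
have [seg' w_seg' last_seg'] := transfer_in aV segV (aC aV) xC w_seg.
have lt_r : size r < n by move: lt_s; rewrite /= size_cat /=; clear; lia.
have Cl_r : last w r \notin C by rewrite last_cat in Cl.
have wC : w \in V -> w \notin C by rewrite (negbTE wV).
have [r' [w_r' last_r' /(_ wV) head_r']] := IH w r lt_r w_r Cl_r wC.
exists (seg' ++ w :: r'); split; [| by rewrite !last_cat /= last_r' | by []].
exact: transfer_cat_out wV xV xC w_s w_seg' last_seg' w_r' head_r'.
Qed.

Lemma dsep_transfer (A B : {set I}) : (forall u v, u \in G1 v -> v \notin G1 u) ->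
  [disjoint A & C] -> [disjoint B & C] -> dsep G2 A B C -> dsep G1 A B C.
Proof.
move=> G1_asym dAC dBC sep a b aA bB s ab act.
have [s1 w1 last_s1] := active_sopen_walk G1_asym ab act.
have aC : a \notin C by rewrite (disjointFr dAC aA).
have bC : last a s1 \notin C by rewrite last_s1 (disjointFr dBC bB).
have [s2 [w2 last_s2 _]] := transfer_walk w1 bC (fun _ => aC).
have [s3 [ab3 act3]] := sopen_walk_active w2.
by apply: (sep a b aA bB s3) act3; rewrite last_s2 last_s1 in ab3.
Qed.

End Transfer.
End Walks.

Lemma acyclicP (J : finType) (G : graph J) :
  reflect (forall u v, u \in G v -> ~~ connect (edge G) v u) (acyclic G).
Proof.
apply: (iffP forallP) => [acyc u v | acyc u]; first by apply/implyP; apply: (forallP (acyc u)).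
by apply/forallP => v; apply/implyP; apply: acyc.
Qed.

Lemma acyclic_hom (J K : finType) (G : graph J) (H : graph K) (f : J -> K) :
  {homo f : u v / edge G u v >-> edge H u v} -> acyclic H -> acyclic G.
Proof.
move=> f_hom /acyclicP acycH; apply/acyclicP => u v uv; apply: contra (acycH _ _ (f_hom _ _ uv)).
case/connectP=> p p_path ->; apply/connectP; exists (map f p); first exact: homo_path p_path.
by rewrite last_map.
Qed.

Lemma acyclic_asym (J : finType) (G : graph J) :
  acyclic G -> forall u v, u \in G v -> v \notin G u.
Proof. by move=> /acyclicP acyc u v uv; apply: contra (acyc u v uv); apply: connect1. Qed.

Lemma markov_equiv_sym (J : finType) (G1 G2 : graph J) :
  markov_equiv G1 G2 -> markov_equiv G2 G1.
Proof. by move=> eq12 A B C dAB dAC dBC; symmetry; apply: eq12. Qed.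

Lemma markov_equiv_trans (J : finType) (G1 G2 G3 : graph J) :
  markov_equiv G1 G2 -> markov_equiv G2 G3 -> markov_equiv G1 G3.
Proof.
move=> eq12 eq23 A B C dAB dAC dBC.
exact: iff_trans (eq12 _ _ _ dAB dAC dBC) (eq23 _ _ _ dAB dAC dBC).
Qed.

Section Restrict.
Variables (I : finType) (V : {set I}).
Local Notation sub := {i : I | i \in V}.
Implicit Types (G F : graph I) (C : {set I}).

Definition restrict (G : graph I) : graph sub := [ffun j => [set i | val i \in G (val j)]].
Definition embed (G0 : graph sub) : graph I :=
  [ffun v => if insub v is Some j then val @: G0 j else set0].
Definition splice (F1 F2 : graph I) : graph I := [ffun v => if v \in V then F1 v else F2 v].

Lemma restrictE G i j : (i \in restrict G j) = (val i \in G (val j)).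
Proof. by rewrite ffunE inE. Qed.

Lemma embedE (G0 : graph sub) j : embed G0 (val j) = val @: G0 j.
Proof. by rewrite ffunE valK. Qed.

Lemma embed_val (G0 : graph sub) i j : (val i \in embed G0 (val j)) = (i \in G0 j).
Proof. by rewrite embedE (mem_imset _ _ val_inj). Qed.

Lemma embed_in (G0 : graph sub) u v : u \in embed G0 v -> (u \in V) && (v \in V).
Proof.
rewrite ffunE; case: insubP => [j -> _|]; last by rewrite inE.
by case/imsetP=> i _ ->; rewrite (valP i).
Qed.

Lemma embed_subset (G0 : graph sub) v : embed G0 v \subset V.
Proof. by apply/subsetP => u /embed_in /andP []. Qed.

Lemma imset_val_restrict G j : G (val j) \subset V -> val @: restrict G j = G (val j).
Proof.
move=> /subsetP G_in; apply/setP => x; apply/imsetP/idP => [[i + ->] | xG].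
  by rewrite restrictE.
by exists (Sub x (G_in x xG)); rewrite ?restrictE.
Qed.

Lemma spliceE (F1 F2 : graph I) v : splice F1 F2 v = if v \in V then F1 v else F2 v.
Proof. by rewrite ffunE. Qed.

Lemma restrict_splice (F1 F2 : graph I) : restrict (splice F1 F2) = restrict F1.
Proof. by apply/ffunP => j; apply/setP => i; rewrite !restrictE spliceE (valP j). Qed.

Lemma walk_restrict G C (t : seq sub) :
  walk (restrict G) (sopen_at (restrict G) [set i | val i \in C]) t =
  walk G (sopen_at G C) (map val t).
Proof.
elim: t => [|x [|y t] IH] //; rewrite /= !walk_cons2 -IH /adj !restrictE.
by case: t {IH} => [|z t] //; rewrite /next_ok /sopen_at /collider !restrictE inE.
Qed.

Lemma acyclic_restrict G : acyclic G -> acyclic (restrict G).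
Proof. by apply: (acyclic_hom (f := val)) => u v; rewrite /edge restrictE. Qed.

Lemma transfer_in_restrict G1 G2 C :
  markov_equiv (restrict G1) (restrict G2) -> acyclic G2 ->
  forall a s, a \in V -> all (mem V) s -> a \notin C -> last a s \notin C ->
  walk G1 (sopen_at G1 C) (a :: s) ->
  exists2 s', walk G2 (sopen_at G2 C) (a :: s') & last a s' = last a s.
Proof.
move=> eq12 acyc2 a s aV sV aC lC w1.
have [ab | a_b] := eqVneq a (last a s); first by exists [::].
pose C' := [set i : sub | val i \in C]; pose a' : sub := Sub a aV.
pose t : seq sub := pmap insub s; pose b' := last a' t.
have t_s : map val t = s.
  rewrite (pmap_filter (@insubK _ _ sub)); apply/all_filterP.
  by rewrite (eq_all (@isSome_insub _ _ sub)).
have b'_val : val b' = last a s by rewrite -t_s -(last_map val t a').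
have w1' : walk (restrict G1) (sopen_at (restrict G1) C') (a' :: t) by rewrite walk_restrict /= t_s.
have [s1 [ab1 act1]] := sopen_walk_active w1'.
have : ~ dsep (restrict G2) [set a'] [set b'] C'.
  rewrite -eq12 ?disjoints1 ?inE ?b'_val //; last by rewrite -(inj_eq val_inj) b'_val.
  by apply/not_dsep1P; exists s1.
case/not_dsep1P=> s2 [ab2 act2].
have [s3 w3 last_s3] := active_sopen_walk (acyclic_asym (acyclic_restrict acyc2)) ab2 act2.
exists (map val s3); first by move: w3; rewrite walk_restrict.
by rewrite -b'_val -last_s3 (last_map val s3 a').
Qed.

Lemma acyclic_embed (G0 : graph sub) : acyclic G0 -> acyclic (embed G0).
Proof.
move=> acyc0; apply/acyclicP => u v uv; have /andP [_ vV] := embed_in uv.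
suff /acyclicP : acyclic (embed G0) by apply.
apply: (acyclic_hom (f := insubd (Sub v vV : sub))) acyc0 => x y /[dup] /embed_in /andP [xV yV].
by rewrite /edge -embed_val !val_insubd xV yV.
Qed.

Section Splice.
Variables F1 F2 : graph I.
Hypothesis F1_in : forall v, v \in V -> F1 v \subset V.

Lemma splice_path_in x p : path (edge (splice F1 F2)) x p -> last x p \in V ->
  x \in V /\ path (edge F1) x p.
Proof.
elim: p x => [|y p IH] x //= /andP [xy /IH {}IH] /IH [yV y_path].
by move: xy; rewrite /edge spliceE yV => xy; rewrite xy y_path (subsetP (F1_in yV)).
Qed.

Lemma splice_path_out x p : x \notin V -> path (edge (splice F1 F2)) x p -> path (edge F2) x p.
Proof.
elim: p x => [|y p IH] x //= xV /andP [xy y_path]; move: xy; rewrite /edge spliceE.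
have [yV /(subsetP (F1_in yV))|yV xy] := ifP; first by rewrite (negbTE xV).
by rewrite xy IH ?yV.
Qed.

Lemma acyclic_splice : acyclic F1 -> acyclic F2 -> acyclic (splice F1 F2).
Proof.
move=> /acyclicP acyc1 /acyclicP acyc2; apply/acyclicP => u v; rewrite spliceE.
case: ifP => vV uv; apply/negP => /connectP [p p_path u_last].
  have /(splice_path_in p_path) [_ p1] : last v p \in V by rewrite -u_last (subsetP (F1_in vV)).
  by have /negP := acyc1 u v uv; apply; apply/connectP; exists p.
have p2 := splice_path_out (negbT vV) p_path.
by have /negP := acyc2 u v uv; apply; apply/connectP; exists p.
Qed.

End Splice.

Lemma dagb_restrict k G : dagb k G -> dagb k (restrict G).
Proof.
rewrite /dagb => /andP [/acyclic_restrict -> /forallP deg]; apply/forallP => j.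
rewrite -(card_imset _ val_inj); apply: leq_trans (deg (val j)); apply: subset_leq_card.
by apply/subsetP => x /imsetP [i + ->]; rewrite restrictE.
Qed.

Lemma dagb_embed k (G0 : graph sub) : dagb k G0 -> dagb k (embed G0).
Proof.
rewrite /dagb => /andP [/acyclic_embed -> /forallP deg]; apply/forallP => v; rewrite ffunE.
by case: insubP => [j _ _|_]; [apply: leq_trans (leq_imset_card _ _) (deg j) | rewrite cards0].
Qed.

Lemma dagb_splice k (F1 F2 : graph I) : (forall v, v \in V -> F1 v \subset V) ->
  dagb k F1 -> dagb k F2 -> dagb k (splice F1 F2).
Proof.
move=> F1_in /andP [acyc1 /forallP deg1] /andP [acyc2 /forallP deg2].
rewrite /dagb acyclic_splice //; apply/forallP => v; rewrite spliceE.
by case: (v \in V); [apply: deg1 | apply: deg2].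
Qed.

Lemma famset_splice (F1 F2 : graph I) (A : {set I * {set I}}) :
  A \subset famset F1 -> A \subset famset F2 -> A \subset famset (splice F1 F2).
Proof.
move=> /subsetP A1 /subsetP A2; apply/subsetP => f Af.
have /imsetP [v _ fv] := A1 f Af; have /imsetP [w _ fw] := A2 f Af.
rewrite fv in fw; case: fw => <- F12; apply/imsetP; exists v => //.
by rewrite fv spliceE F12; case: (v \in V).
Qed.

Lemma markov_equiv_splice (F1 F2 : graph I) :
  (forall v, v \in V -> F1 v \subset V) -> (forall v, v \in V -> F2 v \subset V) ->
  acyclic F1 -> acyclic F2 -> markov_equiv (restrict F1) (restrict F2) ->
  markov_equiv (splice F1 F2) F2.
Proof.
move=> F1_in F2_in acyc1 acyc2 eq12 A B C _ dAC dBC; pose S := splice F1 F2.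
have S_in v : v \in V -> S v \subset V by move=> vV; rewrite spliceE vV; apply: F1_in.
have S_out v : v \notin V -> S v = F2 v by move=> vV; rewrite spliceE (negbTE vV).
have acycS : acyclic S by apply: acyclic_splice.
have eqS2 : markov_equiv (restrict S) (restrict F2) by rewrite restrict_splice.
have eq2S := markov_equiv_sym eqS2.
split.
- apply: (dsep_transfer (fun v vV => esym (S_out v vV)) F2_in S_in) (acyclic_asym acyc2) dAC dBC.
  exact: transfer_in_restrict eq2S acycS.
- apply: (dsep_transfer S_out S_in F2_in) (acyclic_asym acycS) dAC dBC.
  exact: transfer_in_restrict eqS2 acyc2.
Qed.

End Restrict.

Local Open Scope ring_scope.

Lemma score_le_Sstar (R : realType) (I Al : finType) (P : outcome I Al -> R) k G :
  dagb k G -> score P G <= Sstar P k.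
Proof. exact: le_bigmax_cond. Qed.

Section Score.
Variables (R : realType) (I Al : finType) (P : outcome I Al -> R) (V : {set I}).
Local Notation sub := {i : I | i \in V}.

Definition restr_outcome (z : outcome I Al) : outcome sub Al := [ffun i => z (val i)].

Lemma sum_margV (Q : pred (outcome sub Al)) (g : outcome sub Al -> R) :
  \sum_(y | Q y) margV P V y * g y = \sum_(z | Q (restr_outcome z)) P z * g (restr_outcome z).
Proof.
rewrite (partition_big restr_outcome Q) //=; apply: eq_bigr => y Qy.
rewrite /margV big_distrl; apply: eq_big => z.
  have -> : [forall i : sub, z (val i) == y i] = (restr_outcome z == y).
    apply/forallP/eqP => [zy | <- i]; last by rewrite ffunE.
    by apply/ffunP => i; rewrite ffunE; apply/eqP.
  by case: eqP => [->|]; rewrite ?Qy ?andbF.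
by move=> /forallP zy; congr (_ * g _); apply/ffunP => i; rewrite ffunE (eqP (zy i)).
Qed.

Lemma marg_margV (S : {set sub}) z :
  marg (margV P V) S (restr_outcome z) = marg P (val @: S) z.
Proof.
rewrite /marg; under eq_bigr do rewrite -[margV _ _ _]mulr1.
rewrite sum_margV; under eq_bigr do rewrite mulr1.
apply: eq_bigl => z'; apply/forallP/forallP => zz' x; apply/implyP.
  by case/imsetP=> i iS ->; have := implyP (zz' i) iS; rewrite !ffunE.
by move=> xS; rewrite !ffunE; apply: (implyP (zz' (val x))); apply: imset_f.
Qed.

Lemma condH_margV (j : sub) (S : {set sub}) :
  condH (margV P V) j S = condH P (val j) (val @: S).
Proof.
rewrite /condH (sum_margV predT (fun y => ln (marg _ (j |: S) y / marg _ S y))) /=.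
by congr (- _); apply: eq_bigr => z _; rewrite !marg_margV imsetU1.
Qed.

Definition entropy_in (G : graph I) := \sum_(v in V) condH P v (G v).
Definition entropy_out (G : graph I) := \sum_(v | v \notin V) condH P v (G v).

Lemma score_split (G : graph I) : score P G = - entropy_in G - entropy_out G.
Proof. by rewrite /score (bigID (mem V)) opprD. Qed.

Lemma score_margV_restrict (G : graph I) : (forall v, v \in V -> G v \subset V) ->
  score (margV P V) (restrict V G) = - entropy_in G.
Proof.
move=> G_in; rewrite /score /entropy_in; congr (- _); rewrite [RHS]big_sub; apply: eq_bigr => j _.
by rewrite condH_margV imset_val_restrict ?G_in ?(valP j).
Qed.

Lemma score_margV_embed (G0 : graph sub) : score (margV P V) G0 = - entropy_in (embed G0).
Proof.
rewrite /score /entropy_in; congr (- _); rewrite [RHS]big_sub.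
by apply: eq_bigr => j _; rewrite condH_margV embedE.
Qed.

Lemma entropy_in_splice (F1 F2 : graph I) : entropy_in (splice V F1 F2) = entropy_in F1.
Proof. by apply: eq_bigr => v vV; rewrite spliceE vV. Qed.

Lemma entropy_out_splice (F1 F2 : graph I) : entropy_out (splice V F1 F2) = entropy_out F2.
Proof. by apply: eq_bigr => v vV; rewrite spliceE (negbTE vV). Qed.

Lemma restrict_equiv_optimal k gamma (G0 : graph sub) (F : graph I) :
  dagb k G0 -> score (margV P V) G0 = Sstar (margV P V) k ->
  (forall G, dagb k G -> ~ markov_equiv G G0 ->
     score (margV P V) G < Sstar (margV P V) k - gamma) ->
  dagb k F -> (forall v, v \in V -> F v \subset V) -> Sstar P k - gamma <= score P F ->
  markov_equiv (restrict V F) G0.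
Proof.
move=> dG0 optG0 gap dF F_in nearF; apply: contrapT => not_eq.
(* otherwise [splice V (embed G0) F] would beat F by more than gamma *)
have := gap _ (dagb_restrict V dF) not_eq.
rewrite -optG0 score_margV_restrict // score_margV_embed.
have := score_le_Sstar P (dagb_splice (fun v _ => embed_subset G0 v) (dagb_embed dG0) dF).
rewrite !score_split entropy_in_splice entropy_out_splice in nearF *; lra.
Qed.

End Score.

Unset Implicit Arguments. Set Strict Implicit. Set Printing Implicit Defensive.

Theorem lemma5 (R : realType) (d k : nat) (Al : finType)
  (P : outcome 'I_d Al -> R) (gamma : R) (V : {set 'I_d})
  (A : {set 'I_d * {set 'I_d}}) (Gstar Gt : graph 'I_d) :
  (0 < k)%N -> 0 < gamma -> is_dist P ->
  stable k P gamma V ->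
  (forall f, f \in A -> is_family k f) ->
  (* E_* = class of Gstar is optimal, and Gstar lies in E_*^{cap A} *)
  dagb k Gstar -> score P Gstar = Sstar P k -> A \subset famset Gstar ->
  (* E~ = class of Gt: E~ <> E_*, S(E~) >= S^* - gamma, and Gt in E~^{cap A} *)
  dagb k Gt -> ~ markov_equiv Gt Gstar -> Sstar P k - gamma <= score P Gt ->
  A \subset famset Gt ->
  exists2 G : graph 'I_d,
    [/\ dagb k G, markov_equiv G Gt & A \subset famset G] &
    forall v, v \in V -> G v = Gstar v.
Proof.
move=> _ gamma_gt0 _ [V_closed [G0 [dG0 optG0 gap]]] _ dS optS AS dT _ nearT AT.
have nearS : Sstar P k - gamma <= score P Gstar by rewrite optS lerBlDr lerDl ltW.
have S_in := V_closed _ dS nearS; have T_in := V_closed _ dT nearT.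
have eqS := restrict_equiv_optimal dG0 optG0 gap dS S_in nearS.
have eqT := restrict_equiv_optimal dG0 optG0 gap dT T_in nearT.
exists (splice V Gstar Gt); last by move=> v vV; rewrite spliceE vV.
split; [exact: dagb_splice | | exact: famset_splice].
apply: markov_equiv_splice (markov_equiv_trans eqS (markov_equiv_sym eqT)) => //.
  by case/andP: dS.
by case/andP: dT.
Qed.
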